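(* For $r\ge2$ and $n\ge1$, the base-$r$ $n$-simplex has local $h^\ast$-polynomial \[ \ell^\ast(\mathcal{B}_{(r,n)};z)=z\sum_{i=0}^{r-2}f^{\langle r-1,i\rangle}_{(r,n-1)}+z\sum_{\ell=1}^{r-2}\left(\sum_{i=0}^{\ell-1}f^{\langle r-1,i\rangle}_{(r,n-1)}+z\sum_{i=\ell}^{r-2}f^{\langle r-1,i\rangle}_{(r,n-1)}\right). \]
   Context: For $r\ge2$, $n\ge1$, $\mathcal{B}_{(r,n)}:=\operatorname{conv}\bigl(e^{(1)},\ldots,e^{(n)},-\sum_{i=1}^n(r-1)r^{i-1}e^{(i)}\bigr)\subset\mathbb{R}^n$. For $m\ge0$ let $f_{(r,m)}(z):=(1+z+\cdots+z^{r-1})^m$ (so $f_{(r,0)}=1$). Every polynomial $f(z)\in\mathbb{R}[z]$ can be written uniquely as $f(z)=\sum_{\ell=0}^{r-2}z^\ell f^{(\ell)}(z^{r-1})$ with $f^{(\ell)}\in\mathbb{R}[z]$; set $f^{\langle r-1,\ell\rangle}:=f^{(\ell)}$ for $0\le\ell\le r-2$. For a lattice simplex $\Delta=\operatorname{conv}(v^{(0)},\ldots,v^{(d)})\subset\mathbb{R}^n$, $\ell^\ast(\Delta;z):=\sum_{x\in\Pi^\circ_\Delta\cap\mathbb{Z}^{n+1}}z^{x_{n+1}}$, where $\Pi^\circ_\Delta:=\{\sum_{i=0}^d\lambda_i(v^{(i)},1):0<\lambda_i<1\}$. *)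

From HB Require Import structures.
From mathcomp Require Import all_boot all_order all_algebra.
Set Implicit Arguments. Unset Strict Implicit. Unset Printing Implicit Defensive.
Import Order.TTheory GRing.Theory Num.Theory.
Local Open Scope ring_scope.

Definition lift_vert (n d : nat) (V : 'I_d.+1 -> 'I_n -> int)
  (i : 'I_d.+1) (j : 'I_n.+1) : int :=
  match unlift ord_max j with Some j' => V i j' | None => 1 end.

Definition in_open_par (R : realFieldType) (n d : nat)
  (V : 'I_d.+1 -> 'I_n -> int) (x : 'rV[int]_(n.+1)) : Prop :=
  exists lam : 'I_d.+1 -> R,
    (forall i, 0 < lam i < 1) /\
    forall j : 'I_n.+1,
      ((x ord0 j)%:~R : R) = \sum_(i < d.+1) lam i * (lift_vert V i j)%:~R.

(* p is the local h^*-polynomial l^*(conv(v^(0..d)); z):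
   the set of lattice points of the open parallelepiped is finite
   (enumerated without repetition by s) and p = sum_{x in it} z^{x_{n+1}}.
   (x_{n+1} = sum lam_i > 0 for such points, so absz is harmless.) *)
Definition is_lstar (R : realFieldType) (n d : nat)
  (V : 'I_d.+1 -> 'I_n -> int) (p : {poly int}) : Prop :=
  exists s : seq 'rV[int]_(n.+1),
    [/\ uniq s,
        (forall x, x \in s <-> in_open_par R V x) &
        p = \sum_(x <- s) 'X^(absz (x ord0 ord_max))].

(* Vertices of B_(r,n): v^(i) = e^(i+1) for i < n, and
   v^(n) = - sum_{j} (r-1) r^j e^(j+1)  (0-based j). *)
Definition Bvert (r n : nat) (i : 'I_n.+1) (j : 'I_n) : int :=
  if (i < n)%N then ((i == j :> nat) : nat)%:Z
  else - ((r.-1 * r ^ j)%N)%:Z.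
Arguments Bvert r n i j : clear implicits.

Definition fpoly (r m : nat) : {poly int} := (\sum_(k < r) 'X^k) ^+ m.

(* f^<r-1,l>: the unique polynomial f^(l) with
   f(z) = sum_{l=0}^{r-2} z^l f^(l)(z^(r-1));
   its j-th coefficient is the (l + j(r-1))-th coefficient of f. *)
Definition fcomp (r l : nat) (f : {poly int}) : {poly int} :=
  \poly_(j < size f) f`_(l + j * r.-1).

From HB Require Import structures.
From mathcomp Require Import all_boot all_order all_algebra.
From mathcomp Require Import zify ring.
Import Order.TTheory GRing.Theory Num.Theory.
Set Implicit Arguments. Unset Strict Implicit. Unset Printing Implicit Defensive.
Local Open Scope ring_scope.

(* A lattice point x of the open parallelepiped of B_(r,n) has coefficients
   lambda_n = k / r^n and lambda_j = x_j + lambda_n (r-1) r^j, where the level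
   k = x_(n+1) - sum_j x_j is an integer in (0, r^n).  Integrality of the
   lambda_j forces x_j = - floor(k (r-1) r^j / r^n) and r not dividing k, so
   the lattice points are indexed by such k, with height
   k - sum_j floor(k (r-1) r^j / r^n).
   Splitting off the leading base-r digit a of k = a r^M + k', the height
   grows by [c < a], where c = floor((r-1) k' / r^M) < r-1 is the carry of k',
   and the carry becomes floor(((r-1) a + c) / r).  Hence the generating
   function of heights, refined by the carry, obeys a linear recursion in
   the carry; it is the recursion that multiplication by 1 + z + ... + z^(r-1)
   induces on the sections f^<r-1,l>, and the formula follows. *)

Lemma big_nat_mul (R : Type) (idx : R) (op : Monoid.com_law idx) a P (F : nat -> R) :
  \big[op/idx]_(0 <= k < a * P) F k =
  \big[op/idx]_(0 <= i < a) \big[op/idx]_(0 <= k < P) F (i * P + k)%N.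
Proof.
elim: a => [|a IHa]; first by rewrite mul0n !big_geq.
rewrite big_nat_recr //= mulSnr (big_cat_nat _ (n := (a * P)%N)) //= ?leq_addr // IHa.
congr (op _ _); rewrite -{1}(add0n (a * P)%N) big_addn addKn.
by apply: eq_big_nat => k _; rewrite addnC.
Qed.

Section Radix.
Variable r : nat.
Hypothesis r_gt1 : (1 < r)%N.

Lemma coef_fcomp l (f : {poly int}) j : (fcomp r l f)`_j = f`_(l + j * r.-1).
Proof.
rewrite /fcomp coef_poly; case: ltnP => // hj.
rewrite nth_default // (leq_trans hj) // (leq_trans _ (leq_addl l _)) // leq_pmulr; lia.
Qed.

Lemma fcompD l : {morph fcomp r l : f g / f + g}.
Proof. by move=> f g; apply/polyP => j; rewrite coefD !coef_fcomp coefD. Qed.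

Lemma fcomp0 l : fcomp r l 0 = 0.
Proof. by apply/polyP => j; rewrite coef_fcomp !coef0. Qed.

Lemma fcomp_mulXn l a (f : {poly int}) : (l < r.-1)%N -> (a < r)%N ->
  fcomp r l (f * 'X^a) =
    if (a <= l)%N then fcomp r (l - a) f else 'X * fcomp r (l + r.-1 - a) f.
Proof.
move=> hl ha; apply/polyP => j; rewrite coef_fcomp coefMXn.
case: (leqP a l) => hal.
  rewrite coef_fcomp ifF ?addnBAC //.
  by apply/negbTE; rewrite -leqNgt; move: (j * _)%N => t; lia.
rewrite coefXM; case: j => [|j] /=; first by rewrite mul0n addn0 ifT //; lia.
rewrite coef_fcomp mulSn ifF; last by apply/negbTE; rewrite -leqNgt; move: (j * _)%N => t; lia.
by congr (_`_ _); move: (j * _)%N => t; lia.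
Qed.

(* [sect_rec] is the effect of multiplying by [1 + z + ... + z^(r-1)] on the
   sections [f^<r-1,l>], [l < r-1]. *)
Definition sect_rec (phi : nat -> {poly int}) (l : nat) : {poly int} :=
  \sum_(0 <= a < l.+1) phi a + \sum_(l.+1 <= a < r) 'X * phi a.-1.

Definition fsec (m l : nat) : {poly int} := fcomp r l (fpoly r m).

Lemma fsec0 l : fsec 0 l = if l == 0%N then 1 else 0.
Proof.
apply/polyP => j; rewrite /fsec /fpoly expr0 coef_fcomp coef1 addn_eq0 muln_eq0.
have -> : (r.-1 == 0%N) = false by lia.
by case: (l == 0%N); rewrite ?orbF ?coef1 ?coef0.
Qed.

Lemma fsecS m l : (l < r.-1)%N -> fsec m.+1 l = sect_rec (fsec m) l.
Proof.
move=> hl; rewrite /fsec /fpoly exprSr -(big_mkord xpredT (fun k => 'X^k)) mulr_sumr.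
rewrite (big_morph _ (fcompD l) (fcomp0 l)) (big_cat_nat _ (n := l.+1)) //=; last lia.
congr (_ + _); rewrite big_nat_rev /=; apply: eq_big_nat => a /andP [ha1 ha2].
  by rewrite fcomp_mulXn ?ifT; try lia; congr fcomp; lia.
by rewrite fcomp_mulXn ?ifF; try lia; congr (_ * fcomp _ _ _); lia.
Qed.

Lemma fsec0_gt0 a : (0 < a)%N -> fsec 0 a = 0.
Proof. by rewrite fsec0; case: eqP => //; lia. Qed.

Lemma fsec1 l : (l < r.-1)%N -> fsec 1 l - 'X * fsec 0 l = 1.
Proof.
have vanish m n (F : nat -> {poly int}) : (forall a, (m <= a < n)%N -> F a = 0) ->
    \sum_(m <= a < n) F a = 0.
  by move=> F0; rewrite big_nat_cond big1 // => a /andP [/F0].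
move=> hl; rewrite fsecS // /sect_rec big_ltn // fsec0 eqxx.
rewrite vanish ?addr0 => [|a /andP [a_gt0 _]]; last exact: fsec0_gt0.
rewrite -addrA -[RHS]addr0; congr (_ + _); apply/eqP; rewrite subr_eq0; apply/eqP.
rewrite big_ltn; last lia.
rewrite vanish ?addr0 // => a /andP [la _]; rewrite fsec0_gt0 ?mulr0 //; lia.
Qed.

(* One more leading digit [a] on a number of carry [l]: see [height_digit]
   and [carry_digit]. *)
Definition digit_rec (phi : nat -> {poly int}) (l : nat) : {poly int} :=
  \sum_(0 <= a < r) 'X^(l < a) * phi ((r.-1 * a + l) %/ r)%N.

Lemma divn_digit a l : (a < r)%N -> (l < r.-1)%N ->
  ((r.-1 * a + l) %/ r)%N = if (a <= l)%N then a else a.-1.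
Proof.
move=> ha hl; have r_gt0 : (0 < r)%N by lia.
set q := r.-1 in hl *; have rq : r = q.+1 by rewrite /q; lia.
case: leqP => hal.
  have -> : (q * a + l = a * r + (l - a))%N by rewrite rq mulnS mulnC; lia.
  by rewrite divnMDl // divn_small ?addn0 //; lia.
have -> : (q * a + l = a.-1 * r + (r + l - a))%N.
  by case: a ha hal => // a ha hal; rewrite rq /= !mulnS mulnC; lia.
by rewrite divnMDl // divn_small ?addn0 //; lia.
Qed.

Lemma digit_recE phi l : (l < r.-1)%N -> digit_rec phi l = sect_rec phi l.
Proof.
move=> hl; rewrite /digit_rec /sect_rec (big_cat_nat _ (n := l.+1)) //=; last lia.
congr (_ + _); apply: eq_big_nat => a /andP [ha1 ha2].
  have -> : (l < a)%N = false by lia.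
  by rewrite divn_digit ?ifT ?mul1r //; lia.
have -> : (l < a)%N = true by lia.
by rewrite divn_digit ?ifF ?expr1 //; lia.
Qed.

Lemma eq_digit_rec phi psi l : (forall b, (b < r.-1)%N -> phi b = psi b) ->
  (l < r.-1)%N -> digit_rec phi l = digit_rec psi l.
Proof.
move=> eq_phi hl; apply: eq_big_nat => a /andP [_ ha]; rewrite eq_phi //.
by rewrite divn_digit //; case: ifP; lia.
Qed.

Lemma digit_recBX phi psi l :
  digit_rec (fun b => phi b - 'X * psi b) l = digit_rec phi l - 'X * digit_rec psi l.
Proof.
rewrite /digit_rec mulr_sumr -sumrB; apply: eq_bigr => a _.
by rewrite mulrBr mulrCA.
Qed.

Lemma iter_digit_rec1 m l : (l < r.-1)%N ->
  iter m digit_rec (fun=> 1) l = fsec m.+1 l - 'X * fsec m l.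
Proof.
elim: m l => [|m IHm] l hl; first by rewrite fsec1.
rewrite iterS (@eq_digit_rec _ (fun b => fsec m.+1 b - 'X * fsec m b)) //.
by rewrite digit_recBX !digit_recE // -!fsecS.
Qed.

Definition floor_sum (M k : nat) : nat :=
  \sum_(j < M) (k * (r.-1 * r ^ j)) %/ r ^ M.
Definition height (M k : nat) : nat := k - floor_sum M k.
Definition carry (M k : nat) : nat := (r.-1 * k) %/ r ^ M.

Lemma expn_r_gt0 M : (0 < r ^ M)%N.
Proof. by rewrite expn_gt0; lia. Qed.

Lemma sum_weights M : (1 + \sum_(j < M) r.-1 * r ^ j)%N = (r ^ M)%N.
Proof. by rewrite -big_distrr /= -predn_exp add1n prednK ?expn_r_gt0. Qed.

Lemma floor_sum_le M k : (floor_sum M k <= k)%N.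
Proof.
rewrite -(leq_pmul2r (expn_r_gt0 M)) /floor_sum big_distrl /=.
apply: (@leq_trans (\sum_(j < M) k * (r.-1 * r ^ j))%N).
  by apply: leq_sum => j _; apply: leq_divM.
by rewrite -big_distrr /= leq_mul2l -(sum_weights M) leq_addl orbT.
Qed.

Lemma carry_lt M k : (k < r ^ M)%N -> (carry M k < r.-1)%N.
Proof. by move=> hk; rewrite /carry ltn_divLR ?expn_r_gt0 // ltn_pmul2l //; lia. Qed.

Lemma carry_digit M a k :
  carry M.+1 (a * r ^ M + k) = ((r.-1 * a + carry M k) %/ r)%N.
Proof.
rewrite /carry expnSr divnMA; congr (_ %/ _)%N.
by rewrite mulnDr mulnA divnMDl ?expn_r_gt0.
Qed.

(* The [j = 0] term of [floor_sum M.+1] is the carry. *)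
Lemma floor_sum_digit M a k : floor_sum M.+1 (a * r ^ M + k) =
  (carry M.+1 (a * r ^ M + k) + a * (r ^ M - 1) + floor_sum M k)%N.
Proof.
rewrite /floor_sum big_ord_recl /= expn0 muln1 mulnC -/(carry M.+1 _) -addnA.
congr (_ + _)%N.
rewrite (eq_bigr (fun j : 'I_M => a * (r.-1 * r ^ j) + (k * (r.-1 * r ^ j)) %/ r ^ M)%N).
  by rewrite big_split /= -big_distrr /= -{2}(sum_weights M) addKn.
move=> j _; rewrite /bump /= add1n expnS expnSr (mulnC r (r ^ j)%N) !mulnA.
rewrite divnMr; last lia.
have -> : ((a * r ^ M + k) * r.-1 * r ^ j =
  (a * r.-1 * r ^ j) * r ^ M + k * r.-1 * r ^ j)%N by ring.
by rewrite divnMDl ?expn_r_gt0.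
Qed.

Lemma height_digit M a k : (a < r)%N -> (k < r ^ M)%N ->
  height M.+1 (a * r ^ M + k) = (height M k + (carry M k < a))%N.
Proof.
move=> ha hk; rewrite /height floor_sum_digit carry_digit divn_digit //; last exact: carry_lt.
have hT := floor_sum_le M k; have hP : (a <= a * r ^ M)%N := leq_pmulr a (expn_r_gt0 M).
rewrite mulnBr muln1.
move: (floor_sum M k) (carry M k) (a * r ^ M)%N hT hP => T c P hT hP.
by case: leqP; lia.
Qed.

Definition height_gf (M : nat) (phi : nat -> {poly int}) : {poly int} :=
  \sum_(0 <= k < r ^ M | ~~ (r %| k)%N) 'X^(height M k) * phi (carry M k).

Lemma height_gf_digit M phi : (0 < M)%N -> height_gf M.+1 phi = height_gf M (digit_rec phi).
Proof.
move=> M_gt0; rewrite /height_gf expnS big_mkcond big_nat_mul exchange_big_nat /=.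
rewrite [RHS]big_mkcond /=; apply: eq_big_nat => k /andP [_ hk].
have dvdn_digit a : (r %| a * r ^ M + k)%N = (r %| k)%N.
  by rewrite dvdn_addr // dvdn_mull // dvdn_exp.
under eq_bigr => a _ do rewrite dvdn_digit.
case: (r %| k)%N => /=; first by rewrite big1.
rewrite mulr_sumr; apply: eq_big_nat => a /andP [_ ha].
by rewrite height_digit // carry_digit exprD mulrA.
Qed.

Lemma height_gf_iter m phi : height_gf m.+1 phi = height_gf 1 (iter m digit_rec phi).
Proof.
by elim: m phi => [|m IHm] phi //; rewrite height_gf_digit // IHm iterSr.
Qed.

Lemma height_gf1 psi : height_gf 1 psi = 'X * \sum_(0 <= b < r.-1) psi b.
Proof.
rewrite /height_gf expn1 big_ltn_cond; last lia.
rewrite dvdn0 /= -{1}(prednK (ltnW r_gt1)) big_add1 /= mulr_sumr.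
rewrite big_nat_cond [RHS]big_nat_cond; apply: eq_big => [b|b /andP [/andP [_ hb] _]].
  by rewrite andbT; case: ltnP => //= hb; apply/negP => /dvdn_leq; lia.
have carry_b : carry 1 b.+1 = b.
  by rewrite /carry expn1 -[(r.-1 * b.+1)%N]addn0 divn_digit //; lia.
rewrite /height /floor_sum big_ord1 expn0 muln1 mulnC -/(carry 1 b.+1) carry_b.
by rewrite subSn // subnn.
Qed.

Lemma sum_sect_rec_subX (g : nat -> {poly int}) :
  'X * \sum_(0 <= b < r.-1) (sect_rec g b - 'X * g b) =
  'X * (\sum_(0 <= i < r.-1) g i)
  + 'X * (\sum_(1 <= l < r.-1)
           ((\sum_(0 <= i < l) g i) + 'X * (\sum_(l <= i < r.-1) g i))).
Proof.
set F := fun l => \sum_(0 <= i < l) g i + 'X * \sum_(l <= i < r.-1) g i.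
have -> : \sum_(0 <= b < r.-1) (sect_rec g b - 'X * g b) = \sum_(1 <= l < r) F l.
  rewrite -{2}(prednK (ltnW r_gt1)) big_add1 /=.
  apply: eq_big_nat => b /andP [_ hb]; rewrite /sect_rec /F (big_add1 _ _ b) /=.
  rewrite big_ltn; last lia.
  by rewrite -addrA; congr (_ + _); rewrite big_ltn // -mulr_sumr addrAC subrr add0r.
rewrite -{1}(prednK (ltnW r_gt1)) big_nat_recr /=; last lia.
by rewrite /F (@big_geq _ _ _ r.-1 r.-1) // mulr0 addr0 mulrDr addrC.
Qed.

Lemma height_gf_fpoly m : height_gf m.+1 (fun=> 1) =
  'X * \sum_(0 <= b < r.-1) (sect_rec (fsec m) b - 'X * fsec m b).
Proof.
rewrite height_gf_iter height_gf1; congr (_ * _); apply: eq_big_nat => b /andP [_ hb].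
by rewrite iter_digit_rec1 // fsecS.
Qed.

End Radix.

Lemma mulzD_in_open_rangeP (N c : nat) (a : int) : (0 < N)%N ->
  (0 < N%:Z * a + c%:Z < N%:Z) = (a == - (c %/ N)%N%:Z) && ~~ (N %| c)%N.
Proof.
move=> N_gt0; rewrite {1 2}(divn_eq c N) /dvdn.
have := ltn_pmod c N_gt0; move: (c %/ N)%N (c %% N)%N => q rho rho_lt.
rewrite PoszD PoszM (mulrC q%:Z) addrA -mulrDr.
case: (eqVneq a (- q%:Z)) => [->|neq] /=.
  by rewrite addNr mulr0 add0r !ltz_nat rho_lt andbT lt0n.
apply/negbTE/negP => /andP [lt0 ltN]; move: neq; rewrite -addr_eq0 => /eqP; apply.
have N_gt0' : 0 < N%:Z by rewrite ltz_nat.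
have rho_lt' : rho%:Z < N%:Z by rewrite ltz_nat.
by nia.
Qed.

Section Parallelepiped.
Variables (R : realFieldType) (r n : nat).
Hypothesis r_gt1 : (1 < r)%N.

Local Notation N := (r ^ n)%N.
Local Notation w j := (r.-1 * r ^ j)%N.

Definition level (x : 'rV[int]_n.+1) : int :=
  x ord0 ord_max - \sum_(j < n) x ord0 (lift ord_max j).

(* The coefficients of [x] are [lambda_n = level x / N] and
   [lambda_j = x_j + lambda_n * w j]. *)
Definition par_cond (x : 'rV[int]_n.+1) : Prop :=
  0 < level x < N%:Z /\
  forall j : 'I_n, 0 < N%:Z * x ord0 (lift ord_max j) + level x * (w j)%:Z < N%:Z.

Lemma widen_lift_max (j : 'I_n) : widen_ord (leqnSn n) j = lift ord_max j.
Proof. exact/val_inj/esym/lift_max. Qed.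

Lemma sum_lift_vert_lift (lam : 'I_n.+1 -> R) j :
  \sum_(i < n.+1) lam i * (lift_vert (Bvert r n) i (lift ord_max j))%:~R
  = lam (lift ord_max j) - lam ord_max * (w j)%:R.
Proof.
rewrite big_ord_recr /= (bigD1 j) //= big1 => [|i neq_ij].
  rewrite /lift_vert !liftK /Bvert /= ltn_ord ltnn eqxx addr0 mulr1.
  by rewrite widen_lift_max intrN mulrN.
rewrite /lift_vert liftK /Bvert /= ltn_ord.
by rewrite (_ : (i == j :> nat) = false) ?mulr0 //; exact: negbTE.
Qed.

Lemma sum_lift_vert_max (lam : 'I_n.+1 -> R) :
  \sum_(i < n.+1) lam i * (lift_vert (Bvert r n) i ord_max)%:~R = \sum_(i < n.+1) lam i.
Proof. by apply: eq_bigr => i _; rewrite /lift_vert unlift_none mulr1. Qed.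

Lemma N_gt0 : (0 < N)%N. Proof. by rewrite expn_gt0; lia. Qed.

Lemma sum_weightsR : (N%:R : R) = 1 + \sum_(j < n) (w j)%:R.
Proof. by rewrite -(sum_weights r_gt1 n) natrD natr_sum. Qed.

Lemma int_in_open_range_scale (z : int) (lam : R) :
  z%:~R = lam * N%:R -> (0 < z < N%:Z) = (0 < lam < 1).
Proof.
have N_gtR : (0 : R) < N%:R by rewrite ltr0n N_gt0.
move=> ez; rewrite -(ltr0z R) ez pmulr_lgt0 //; congr (_ && _).
by rewrite -(ltr_int R) ez -[X in _ < X]mul1r ltr_pM2r.
Qed.

Lemma open_par_Bvert_cond x : in_open_par R (Bvert r n) x -> par_cond x.
Proof.
move=> [lam [lam01 ex]].
have ex_lift j : ((x ord0 (lift ord_max j))%:~R : R) =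
    lam (lift ord_max j) - lam ord_max * (w j)%:R by rewrite ex sum_lift_vert_lift.
have ex_max : ((x ord0 ord_max)%:~R : R) = \sum_(i < n.+1) lam i.
  by rewrite ex sum_lift_vert_max.
have e_level : ((level x)%:~R : R) = lam ord_max * N%:R.
  rewrite /level intrB mulrz_sumr ex_max big_ord_recr /=.
  under eq_bigr => j _ do rewrite widen_lift_max.
  under [X in _ - X]eq_bigr => j _ do rewrite ex_lift.
  by rewrite sumrB -mulr_sumr sum_weightsR; ring.
split; first by rewrite (int_in_open_range_scale e_level) lam01.
move=> j; rewrite (@int_in_open_range_scale _ (lam (lift ord_max j))) ?lam01 //.
by rewrite intrD !intrM e_level ex_lift !pmulrn; ring.
Qed.

Lemma cond_open_par_Bvert x : par_cond x -> in_open_par R (Bvert r n) x.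
Proof.
move=> [level01 coord01].
have N_neq0 : (N%:R : R) != 0 by rewrite pnatr_eq0 -lt0n N_gt0.
pose lam i : R := if unlift ord_max i is Some j
  then (N%:Z * x ord0 (lift ord_max j) + level x * (w j)%:Z)%:~R / N%:R
  else (level x)%:~R / N%:R.
have lam01 (z : int) : 0 < z < N%:Z -> 0 < (z%:~R : R) / N%:R < 1.
  by move=> z01; rewrite -(@int_in_open_range_scale z) ?divfK.
exists lam; split.
  by move=> i; rewrite /lam; case: unliftP => [j _|_]; apply: lam01.
move=> i; case: (unliftP ord_max i) => [j ->|->].
  rewrite sum_lift_vert_lift /lam liftK unlift_none intrD !intrM !pmulrn.
  by field.
rewrite sum_lift_vert_max big_ord_recr /= /lam unlift_none.
under eq_bigr => j _ do rewrite widen_lift_max liftK.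
rewrite (eq_bigr (fun j =>
    (x ord0 (lift ord_max j))%:~R + (level x)%:~R / N%:R * (w j)%:R)); last first.
  by move=> j _; rewrite intrD !intrM !pmulrn; field.
rewrite big_split /= -mulr_sumr /level intrB mulrz_sumr sum_weightsR.
have D_neq0 : 1 + \sum_(j < n) ((w j)%:R : R) != 0 by rewrite -sum_weightsR.
by field.
Qed.

Lemma open_par_BvertP x : in_open_par R (Bvert r n) x <-> par_cond x.
Proof. by split; [exact: open_par_Bvert_cond | exact: cond_open_par_Bvert]. Qed.

Definition lattice_point (k : nat) : 'rV[int]_n.+1 :=
  \row_j if unlift ord_max j is Some j' then - ((k * w j') %/ N)%N%:Z
         else (height r n k)%:Z.

Lemma lattice_point_lift k j :
  lattice_point k ord0 (lift ord_max j) = - ((k * w j) %/ N)%N%:Z.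
Proof. by rewrite mxE liftK. Qed.

Lemma lattice_point_max k : lattice_point k ord0 ord_max = (height r n k)%:Z.
Proof. by rewrite mxE unlift_none. Qed.

Lemma level_lattice_point k : level (lattice_point k) = k%:Z.
Proof.
rewrite /level lattice_point_max; under eq_bigr => j _ do rewrite lattice_point_lift.
rewrite sumrN opprK -(big_morph _ PoszD (erefl 0%:Z)) -PoszD /height subnK //.
exact: floor_sum_le.
Qed.

Lemma dvdn_weight k (j : 'I_n) : (N %| k * w j)%N -> (r %| k)%N.
Proof.
have -> : N = (r * r ^ (n - j.+1) * r ^ j)%N.
  by rewrite -expnS -expnD; congr (_ ^ _)%N; have := ltn_ord j; lia.
rewrite mulnA dvdn_pmul2r ?expn_gt0; last lia.
move=> /(dvdn_trans (dvdn_mulr _ (dvdnn r))).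
have co : coprime r r.-1 by rewrite -{1}(prednK (ltnW r_gt1)) coprimeSn.
by rewrite Gauss_dvdl.
Qed.

Lemma par_condP x : (0 < n)%N ->
  par_cond x <-> exists2 k, (0 < k < N)%N && ~~ (r %| k)%N & x = lattice_point k.
Proof.
move=> n_gt0; split=> [[level01 coord01]|[k /andP [k01 ndvd] ->]]; last first.
  split=> [|j]; first by rewrite level_lattice_point !ltz_nat.
  rewrite level_lattice_point lattice_point_lift -PoszM.
  rewrite mulzD_in_open_rangeP ?N_gt0 // eqxx /=.
  by apply: contra ndvd; apply: dvdn_weight.
have [k ek] : exists k : nat, level x = k%:Z.
  by exists `|level x|%N; rewrite gez0_abs // ltW //; case/andP: level01.
have coordP j :
    (x ord0 (lift ord_max j) == - ((k * w j) %/ N)%N%:Z) && ~~ (N %| k * w j)%N.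
  by rewrite -mulzD_in_open_rangeP ?N_gt0 // PoszM -ek coord01.
exists k.
  rewrite -!ltz_nat -ek level01 /=; apply/negP => /dvdnP [t kE].
  have last_lt_n : (n.-1 < n)%N by rewrite ltn_predL.
  have := coordP (Ordinal last_lt_n); rewrite andbC => /andP [/negP []].
  have -> : (k * w n.-1 = t * r.-1 * N)%N.
    by rewrite kE -[in RHS](prednK n_gt0) expnS; ring.
  exact: dvdn_mull.
apply/matrixP => i j; rewrite (ord1 i) {i}.
case: (unliftP ord_max j) => [j' ->|->].
  by rewrite lattice_point_lift; case/andP: (coordP j') => /eqP.
rewrite lattice_point_max /height -subzn ?floor_sum_le //.
move: ek; rewrite /level => /eqP; rewrite subr_eq => /eqP ->; congr (_ + _).
rewrite /floor_sum (big_morph _ PoszD (erefl 0%:Z)) -sumrN; apply: eq_bigr => i _.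
by case/andP: (coordP i) => /eqP.
Qed.

Lemma is_lstar_Bvert : (0 < n)%N -> is_lstar R (Bvert r n) (height_gf r n (fun=> 1)).
Proof.
move=> n_gt0.
exists [seq lattice_point k | k <- [seq k <- index_iota 0 N | ~~ (r %| k)%N]]; split.
- rewrite map_inj_in_uniq ?filter_uniq ?iota_uniq // => a b _ _ /(congr1 level).
  by rewrite !level_lattice_point => -[].
- move=> x; rewrite open_par_BvertP par_condP //; split=> [/mapP [k]|[k]].
    rewrite mem_filter mem_index_iota => /andP [ndvd kN] ->; exists k => //.
    move: kN; rewrite ndvd andbT lt0n => /andP [_ ->]; rewrite andbT.
    by apply: contraNneq ndvd => ->; rewrite dvdn0.
  move=> /andP [/andP [_ kN] ndvd] ->; apply: map_f.
  by rewrite mem_filter mem_index_iota ndvd kN.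
- by rewrite big_map big_filter; apply: eq_bigr => k _; rewrite lattice_point_max mulr1.
Qed.

End Parallelepiped.

Theorem theorem4p2 (R : realFieldType) (r n : nat) (hr : (2 <= r)%N) (hn : (1 <= n)%N) :
  is_lstar R (Bvert r n)
    ('X * (\sum_(0 <= i < r.-1) fcomp r i (fpoly r n.-1))
     + 'X * (\sum_(1 <= l < r.-1)
               ((\sum_(0 <= i < l) fcomp r i (fpoly r n.-1))
                + 'X * (\sum_(l <= i < r.-1) fcomp r i (fpoly r n.-1))))).
Proof.
case: n hn => [|m] // _.
rewrite -(sum_sect_rec_subX hr (fsec r m)) -height_gf_fpoly //.
exact: is_lstar_Bvert.
Qed.
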